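(* Let $M\ge1$, $m=2M+1$, $h>0$, $T>0$, and let $D$, $I^{(-1)}$, $e_m$ be as in the context. For every $\mu>0$ the matrix $\mu^{-1}D^{-1}+I^{(-1)}$ is nonsingular, so $z(\mu):=e_m^{\mathsf T}\left(\mu^{-1}D^{-1}+I^{(-1)}\right)^{-1}e_m$ is well defined; setting $z(0):=0$ (equivalently $z(\mu)=\mu e_m^{\mathsf T}D(I_m+\mu I^{(-1)}D)^{-1}e_m$), one has $z(\mu)\in[0,2)$ for all $\mu\ge 0$.
   Context: Sinc time points: $t_j=\dfrac{T e^{jh}}{1+e^{jh}}$, $j=-M,\dots,M$. $D=h\,\mathrm{diag}\big(t_{-M}(T-t_{-M})/T,\dots,t_M(T-t_M)/T\big)\in\mathbb{R}^{m\times m}$. $I^{(-1)}\in\mathbb{R}^{m\times m}$ is the Toeplitz matrix with entries $I^{(-1)}_{l,j}=\frac12+\int_0^{l-j}\frac{\sin(\pi t)}{\pi t}\,dt$, $l,j=1,\dots,m$. $e_m=(1,\dots,1)^{\mathsf T}\in\mathbb{R}^m$. *)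

From Stdlib Require Import Reals.
From Coquelicot Require Import Coquelicot.
From HB Require Import structures.
From mathcomp Require Import all_boot all_algebra.
From mathcomp Require Import Rstruct.

Local Open Scope R_scope.

Definition sincR (t : R) : R :=
  if Req_EM_T t 0 then 1 else sin (PI * t) / (PI * t).

(* index i : 'I_(2M+1) (i = 0..2M) corresponds to j = i - M in {-M..M} *)
Definition sidx (M : nat) (i : 'I_((2 * M)%N.+1)) : R :=
  IZR (Z.of_nat (nat_of_ord i) - Z.of_nat M).

Definition sinc_node (M : nat) (h T : R) (i : 'I_((2 * M)%N.+1)) : R :=
  T * exp (sidx M i * h) / (1 + exp (sidx M i * h)).

Definition Dentry (M : nat) (h T : R) (i : 'I_((2 * M)%N.+1)) : R :=
  h * (sinc_node M h T i * (T - sinc_node M h T i) / T).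

Definition Ientry (M : nat) (l j : 'I_((2 * M)%N.+1)) : R :=
  / 2 + RInt sincR 0 (IZR (Z.of_nat (nat_of_ord l) - Z.of_nat (nat_of_ord j))).

Local Close Scope R_scope.
Local Open Scope ring_scope.

Definition Dmat (M : nat) (h T : R) : 'M[R]_((2 * M)%N.+1) :=
  diag_mx (\row_i Dentry M h T i).

Definition Iinv (M : nat) : 'M[R]_((2 * M)%N.+1) :=
  \matrix_(l, j) Ientry M l j.

Definition em (M : nat) : 'cV[R]_((2 * M)%N.+1) := const_mx 1.

Definition Amat (M : nat) (h T mu : R) : 'M[R]_((2 * M)%N.+1) :=
  mu^-1 *: invmx (Dmat M h T) + Iinv M.

Definition zfun (M : nat) (h T mu : R) : R :=
  if Req_EM_T mu 0 then 0
  else ((em M)^T *m invmx (Amat M h T mu) *m em M) ord0 ord0.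

(* The proof rests on two observations.
   - Analytic: sinc is even, so its primitive S(x) = \int_0^x sinc is odd and the
     entries 1/2 + S(l - j) of I^(-1) satisfy I^(-1) + (I^(-1))^T = e e^T.
   - Algebraic: if P is positive definite and B + B^T = u u^T, then for every
     row vector v, v (P + B) v^T = v P v^T + (v u)^2 / 2 > 0, so A = P + B is
     positive definite, hence invertible.  Putting y = A^-1 u and
     z = u^T A^-1 u = y^T u, one gets z = y^T A y = y^T P y + z^2 / 2 with
     y^T P y > 0, which forces 0 < z < 2.
   For mu > 0 the matrix mu^-1 D^-1 is diagonal with positive entries (the sinc
   nodes lie in (0, T)), hence positive definite; the theorem follows by
   applying the algebraic fact with P = mu^-1 D^-1, B = I^(-1) and u = e, the
   case mu = 0 being z(0) = 0 by definition. *)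

From Stdlib Require Import Reals Lra Lia.
From Coquelicot Require Import Coquelicot.
From mathcomp Require Import all_boot all_order all_algebra.
From mathcomp Require Import Rstruct.
From mathcomp Require Import lra.

Lemma sincR_even (x : R) : sincR (- x) = sincR x.
Proof.
rewrite /sincR; case: Req_EM_T => Hnx; case: Req_EM_T => Hx //=; try Lra.lra.
rewrite -Ropp_mult_distr_r sin_neg; field.
by split; [exact: Hx | exact: PI_neq0].
Qed.

(* sin(pi x)/(pi x) -> 1 at 0: the derivative of sin at 0 is cos 0 = 1. *)
Lemma sincR_continuous_0 : continuous sincR 0.
Proof.
apply/continuity_pt_filterlim => eps eps_gt0.
have [d Hd] := derivable_pt_lim_sin 0 eps eps_gt0.
have PI_gt0 := PI_RGT_0.
exists (d / PI); split; first by apply: Rdiv_lt_0_compat; [apply: cond_pos | Lra.lra].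
move=> x [[_ x0] /= Hx]; rewrite /R_dist Rminus_0_r in Hx *.
have xNZ : x <> 0 by move=> x_eq0; apply: x0; Lra.lra.
have -> : sincR x = sin (PI * x) / (PI * x) by rewrite /sincR; case: Req_EM_T.
have -> : sincR 0 = 1 by rewrite /sincR; case: Req_EM_T.
have PIxNZ : PI * x <> 0 by move/Rmult_integral; Lra.lra.
have := Hd (PI * x) PIxNZ; rewrite Rplus_0_l sin_0 cos_0 Rminus_0_r; apply.
rewrite Rabs_mult Rabs_right; last by Lra.lra.
have -> : pos d = PI * (d / PI) by field; Lra.lra.
exact: Rmult_lt_compat_l.
Qed.

(* Away from 0, sinc coincides locally with a differentiable quotient. *)
Lemma sincR_continuous (x : R) : continuous sincR x.
Proof.
have [-> | xNZ] := Req_dec x 0; first exact: sincR_continuous_0.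
have PI_gt0 := PI_RGT_0.
apply: (@continuous_ext_loc _ _ sincR (fun y => sin (PI * y) / (PI * y))).
- have absx_gt0 : 0 < Rabs x by apply: Rabs_pos_lt.
  exists (mkposreal _ absx_gt0) => y /= Hy.
  rewrite /sincR; case: Req_EM_T => // y0; exfalso; move: Hy; rewrite y0.
  rewrite /ball /= /AbsRing_ball /abs /minus /plus /opp /= Rplus_0_l Rabs_Ropp.
  by Lra.lra.
- apply: (@ex_derive_continuous R_AbsRing R_NormedModule).
  by auto_derive; move/Rmult_integral; Lra.lra.
Qed.

Lemma ex_RInt_sincR (a b : R) : ex_RInt sincR a b.
Proof. by apply: (@ex_RInt_continuous R_CompleteNormedModule) => z _; apply: sincR_continuous. Qed.

(* The primitive of the even function sinc vanishing at 0 is odd. *)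
Lemma RInt_sincR_odd (a : R) : RInt sincR 0 (- a) = - RInt sincR 0 a.
Proof.
have := @is_RInt_comp_opp R_NormedModule sincR 0 a (RInt sincR (- 0) (- a))
  (@RInt_correct R_CompleteNormedModule _ _ _ (ex_RInt_sincR _ _)).
move/(@is_RInt_unique R_CompleteNormedModule); rewrite Ropp_0 => <-.
rewrite (RInt_ext _ (fun y => Hierarchy.opp (sincR y))); last by move=> y _; rewrite sincR_even.
by rewrite (@RInt_opp R_CompleteNormedModule) //; apply: ex_RInt_sincR.
Qed.

(* The diagonal entries of D are positive: t_j and T - t_j = T/(1 + e^{jh}) are. *)
Lemma Dentry_pos (M : nat) (h T : R) (i : 'I_((2 * M)%N.+1)) :
  Rlt 0 h -> Rlt 0 T -> Rlt 0 (Dentry M h T i).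
Proof.
move=> h_gt0 T_gt0; rewrite /Dentry /sinc_node.
set E := exp (sidx M i * h).
have E_gt0 : 0 < E by apply: exp_pos.
have -> : T - T * E / (1 + E) = T / (1 + E) by field; Lra.lra.
have pos_frac a : 0 < a -> 0 < a / (1 + E) by move=> a_gt0; apply: Rdiv_lt_0_compat; Lra.lra.
apply: Rmult_lt_0_compat => //; apply: Rdiv_lt_0_compat => //.
by apply: Rmult_lt_0_compat; apply: pos_frac => //; apply: Rmult_lt_0_compat.
Qed.

Import Order.TTheory GRing.Theory Num.Theory.
Local Open Scope ring_scope.

Section QuadraticForm.
Context {F : realFieldType} {n : nat}.

Definition qform (v : 'rV[F]_n) (X : 'M[F]_n) : F := (v *m X *m v^T) 0 0.

(* X is positive definite (X need not be symmetric). *)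
Definition posdef (X : 'M[F]_n) : Prop := forall v, v != 0 -> 0 < qform v X.

Lemma qformD (v : 'rV[F]_n) (X Y : 'M[F]_n) :
  qform v (X + Y) = qform v X + qform v Y.
Proof. by rewrite /qform mulmxDr mulmxDl mxE. Qed.

Lemma qform_tr (v : 'rV[F]_n) (X : 'M[F]_n) : qform v X^T = qform v X.
Proof. by rewrite /qform -{1}(trmxK v) -!trmx_mul mulmxA [in LHS]mxE. Qed.

Lemma qform_rank1 (v : 'rV[F]_n) (u : 'cV[F]_n) :
  qform v (u *m u^T) = (v *m u) 0 0 ^+ 2.
Proof.
by rewrite /qform !mulmxA -(mulmxA (v *m u)) -trmx_mul mxE big_ord1 [X in _ * X]mxE.
Qed.

Lemma qform_halfsym (v : 'rV[F]_n) {u : 'cV[F]_n} {B : 'M[F]_n} :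
  B + B^T = u *m u^T -> 2 * qform v B = (v *m u) 0 0 ^+ 2.
Proof. by move=> symB; rewrite -qform_rank1 -symB qformD qform_tr; lra. Qed.

Lemma posdef_diag {c : 'rV[F]_n} : (forall i, 0 < c 0 i) -> posdef (diag_mx c).
Proof.
move=> c_gt0 v vNZ; rewrite /qform mul_mx_diag mxE.
have [i viNZ] : exists i, v 0 i != 0.
  apply/existsP; apply: contraR vNZ; rewrite negb_exists => /forallP v0.
  by apply/eqP/rowP => i; rewrite mxE; apply/eqP/negbNE/v0.
rewrite (bigD1 i) //= ltr_pwDl //.
  by rewrite !mxE mulrAC -expr2 mulr_gt0 ?exprn_even_gt0 ?c_gt0.
apply: sumr_ge0 => j _; rewrite !mxE mulrAC -expr2.
by rewrite mulr_ge0 ?sqr_ge0 ?ltW ?c_gt0.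
Qed.

(* A positive definite matrix has no nonzero left null vector. *)
Lemma posdef_unitmx {A : 'M[F]_n} : posdef A -> A \in unitmx.
Proof.
move=> pdA; rewrite unitmxE unitfE; apply/negP => /det0P [v vNZ vA].
by have := pdA v vNZ; rewrite /qform vA mul0mx mxE ltxx.
Qed.

(* Adding B with B + B^T = u u^T only increases the form. *)
Lemma posdef_add_halfsym {P B : 'M[F]_n} {u : 'cV[F]_n} :
  posdef P -> B + B^T = u *m u^T -> posdef (P + B).
Proof.
move=> pdP symB v vNZ; rewrite qformD.
have := qform_halfsym v symB; have := pdP v vNZ; have := sqr_ge0 ((v *m u) 0 0).
lra.
Qed.

Lemma bilinear_inverse_bound {P B : 'M[F]_n} {u : 'cV[F]_n} :
  posdef P -> B + B^T = u *m u^T -> u != 0 ->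
  0 < (u^T *m invmx (P + B) *m u) 0 0 < 2.
Proof.
move=> pdP symB uNZ; set A := P + B.
have unitA : A \in unitmx by apply/posdef_unitmx/(posdef_add_halfsym pdP symB).
set y := invmx A *m u.
have Ay : A *m y = u by rewrite /y mulKVmx.
have yNZ : y^T != 0.
  by apply: contraNneq uNZ => /eqP; rewrite trmx_eq0 => /eqP y0; rewrite -Ay y0 mulmx0.
(* z = u^T y = y^T u, and also z = y^T A y. *)
have z_sym : (u^T *m invmx A *m u) 0 0 = (y^T *m u) 0 0.
  by rewrite -mulmxA -/y -[u^T *m y]trmxK [LHS]mxE trmx_mul trmxK.
have z_form : (y^T *m u) 0 0 = qform y^T A by rewrite /qform trmxK -mulmxA Ay.
have z_eq : 2 * (y^T *m u) 0 0 = 2 * qform y^T P + (y^T *m u) 0 0 ^+ 2.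
  by rewrite {1}z_form qformD mulrDr (qform_halfsym _ symB).
have q_gt0 := pdP _ yNZ.
(* z = q + z^2 / 2 with q > 0 forces 0 < z < 2. *)
by rewrite z_sym; apply/andP; split; nra.
Qed.

End QuadraticForm.

Lemma invmx_diag (F : fieldType) (n : nat) (d : 'rV[F]_n) :
  (forall i, d 0 i != 0) -> invmx (diag_mx d) = diag_mx (\row_i (d 0 i)^-1).
Proof.
move=> dNZ.
have inv_d : diag_mx d *m diag_mx (\row_i (d 0 i)^-1) = 1%:M.
  by rewrite mulmx_diag -diag_const_mx; congr diag_mx; apply/rowP => i; rewrite !mxE divff.
have unit_d := (mulmx1_unit inv_d).1.
by rewrite -[RHS](mulKmx unit_d) inv_d mulmx1.
Qed.

(* I^(-1) + (I^(-1))^T = e e^T, by oddness of the sinc primitive. *)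
Lemma Iinv_halfsym (M : nat) : Iinv M + (Iinv M)^T = em M *m (em M)^T.
Proof.
apply/matrixP => l j; rewrite !mxE big_ord1 !mxE mulr1 /Ientry.
have -> : Z.sub (Z.of_nat j) (Z.of_nat l) = Z.opp (Z.sub (Z.of_nat l) (Z.of_nat j)) by lia.
rewrite opp_IZR RInt_sincR_odd -RplusE.
by have -> : 1 = R1 by []; Lra.lra.
Qed.

Lemma Amat_diag_plus_Iinv (M : nat) (h T mu : R) :
  Rlt 0 h -> Rlt 0 T -> Rlt 0 mu ->
  Amat M h T mu = diag_mx (\row_i (mu * Dentry M h T i)^-1) + Iinv M
  /\ forall i, 0 < (\row_i (mu * Dentry M h T i)^-1 : 'rV_((2 * M)%N.+1)) 0 i.
Proof.
move=> /RltP h_gt0 /RltP T_gt0 /RltP mu_gt0.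
have D_gt0 i : 0 < Dentry M h T i by apply/RltP/Dentry_pos; apply/RltP.
split=> [|i]; last by rewrite mxE invr_gt0 mulr_gt0.
rewrite /Amat /Dmat invmx_diag => [|i]; last by rewrite mxE gt_eqF.
congr (_ + _); apply/matrixP => i j.
by rewrite !mxE mulrnAr -invfM.
Qed.

(* The main result. *)
Theorem lemma3p2 (M : nat) (h T : R) :
  (1 <= M)%N -> Rlt 0 h -> Rlt 0 T ->
  (forall mu : R, Rlt 0 mu -> Amat M h T mu \in unitmx) /\
  (forall mu : R, Rle 0 mu ->
     Rle 0 (zfun M h T mu) /\ Rlt (zfun M h T mu) 2).
Proof.
move=> _ h_gt0 T_gt0.
have emNZ : em M != 0 by apply/negP => /eqP/matrixP/(_ 0 0); rewrite !mxE; apply/eqP/oner_neq0.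
have decomp mu := Amat_diag_plus_Iinv M h T mu h_gt0 T_gt0.
split=> [mu mu_gt0 | mu mu_ge0].
  have [-> c_gt0] := decomp mu mu_gt0.
  exact/posdef_unitmx/(posdef_add_halfsym (posdef_diag c_gt0) (Iinv_halfsym M)).
rewrite /zfun; case: (Req_EM_T mu 0) => [mu0 | muNZ]; rewrite [is_left _]/=.
  by split; [apply: Rle_refl | apply: Rlt_0_2].
have [-> c_gt0] := decomp mu (ltac:(Lra.lra)).
have /andP [z_gt0 z_lt2] := bilinear_inverse_bound (posdef_diag c_gt0) (Iinv_halfsym M) emNZ.
by split; [apply/Rlt_le/RltP | apply/RltP].
Qed.
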